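(* Let $n\ge1$, $m\ge0$ and let $(v^0\sim v^1\sim\dots\sim v^d)$ be a geodesic in the dYoke graph $Z_{n,m}$. Then for every $0\le i\le m$, all steps along the geodesic that shift a unit between entries $i$ and $i+1$ shift in the same direction; i.e., there are no $1\le t,t'\le d$ with $v^t=\overleftarrow{s}_i(v^{t-1})$ and $v^{t'}=\overrightarrow{s}_i(v^{t'-1})$.
   Context: The dYoke graph $Z_{n,m}$ has vertices the tuples $v=(v_0,\dots,v_{m+1})$ with $v_0,v_{m+1}\in\mathbb{Z}_n$, $v_1,\dots,v_m\in\{-1,0,1\}$ and $\sum v_i\equiv0\pmod n$; $u\sim v$ iff $u=\overleftarrow{s}_i(v)$ or $u=\overrightarrow{s}_i(v)$ for some $0\le i\le m$, where $\overleftarrow{s}_i(v)$ (left shift) replaces $v_i,v_{i+1}$ by $v_i+1,v_{i+1}-1$ and $\overrightarrow{s}_i(v)$ (right shift) replaces them by $v_i-1,v_{i+1}+1$ (bucket entries $v_0,v_{m+1}$ computed mod $n$; the result must be a vertex). *)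

From mathcomp Require Import all_boot all_order all_algebra.
Unset Printing Implicit Defensive.
Import Order.TTheory GRing.Theory Num.Theory.
Local Open Scope ring_scope.

(* A tuple v = (v_0,...,v_{m+1}) is a finite function 'I_(m+2) -> int.
   Bucket entries v_0, v_{m+1} are elements of Z_n, represented by their
   canonical representatives in {0,...,n-1}. *)
Definition is_bucket (m : nat) (j : 'I_m.+2) : bool :=
  (val j == 0)%N || (val j == m.+1)%N.

Definition is_vertex (n m : nat) (v : {ffun 'I_m.+2 -> int}) : bool :=
  [forall j : 'I_m.+2,
     if is_bucket m j then (0 <= v j) && (v j < n%:Z)
     else (-1 <= v j) && (v j <= 1)]
  && (n%:Z %| \sum_(j < m.+2) v j)%Z.

Definition shift_by (n m : nat) (a b : int) (i : nat)
  (v : {ffun 'I_m.+2 -> int}) : {ffun 'I_m.+2 -> int} :=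
  [ffun j : 'I_m.+2 =>
     let x := if val j == i then v j + a
              else if val j == i.+1 then v j + b else v j in
     if is_bucket m j then (x %% n%:Z)%Z else x].

Definition lshift_dY (n m i : nat) (v : {ffun 'I_m.+2 -> int}) :=
  shift_by n m 1 (-1) i v.
Definition rshift_dY (n m i : nat) (v : {ffun 'I_m.+2 -> int}) :=
  shift_by n m (-1) 1 i v.

Definition adj (n m : nat) (u v : {ffun 'I_m.+2 -> int}) : Prop :=
  is_vertex n m u /\ is_vertex n m v /\
  exists i : nat, (i <= m)%N /\ (u = lshift_dY n m i v \/ u = rshift_dY n m i v).

Definition is_walk (n m : nat) (p : nat -> {ffun 'I_m.+2 -> int}) (d : nat)
  : Prop :=
  is_vertex n m (p 0%N) /\ forall t : nat, (t < d)%N -> adj n m (p t.+1) (p t).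

Definition is_geodesic (n m : nat) (p : nat -> {ffun 'I_m.+2 -> int})
  (d : nat) : Prop :=
  is_walk n m p d /\
  forall (q : nat -> {ffun 'I_m.+2 -> int}) (e : nat),
    is_walk n m q e -> q 0%N = p 0%N -> q e = p d -> (d <= e)%N.

(* Take two opposite shifts at a position i, at steps t < u, as close together
   as possible over all positions.  No step strictly between them shifts at i,
   and those shifting at any other position all go the same way, so the
   entries i and i+1 move monotonically from step t to step u-1.  Hence the
   shift of step u maps p t, ..., p (u-1) to vertices, and skipping steps t
   and u gives a walk with the same endpoints that is two steps shorter. *)

From mathcomp Require Import all_boot all_order all_algebra.
From mathcomp Require Import zify ring lra.
Set Implicit Arguments.
Unset Strict Implicit.
Import Order.TTheory GRing.Theory Num.Theory.
Local Open Scope ring_scope.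

Lemma nondecreasing_between (R : realDomainType) (f : nat -> R) a b :
  (forall s, (a < s <= b)%N -> f s.-1 <= f s) ->
  forall s, (a <= s <= b)%N -> f a <= f s <= f b.
Proof.
move=> incr s sab.
have mono : {in [pred x | a <= x <= b]%N &,
    {homo f : x y / (x <= y)%N >-> x <= y}}.
  apply: homo_leq_in => [x|y x z|x y|x]; [exact: lexx | exact: le_trans | |].
    move=> xab yab k xky; rewrite !inE in xab yab *; lia.
  move=> xab x1ab; rewrite !inE in xab x1ab; apply: (incr x.+1); lia.
by rewrite !mono ?inE ?leqnn //; lia.
Qed.

Lemma same_sign_steps_between (R : realDomainType) (f : nat -> R) a b lo hi :
  (forall s1 s2, (a < s1 <= b)%N -> (a < s2 <= b)%N ->
     0 <= (f s1 - f s1.-1) * (f s2 - f s2.-1)) ->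
  lo <= f a <= hi -> lo <= f b <= hi ->
  forall s, (a <= s <= b)%N -> lo <= f s <= hi.
Proof.
move=> same_sign fa fb s sab.
have [/hasP[s1] | /hasPn down] :=
  boolP (has (fun s => f s.-1 < f s) (index_iota a.+1 b.+1)).
  rewrite mem_index_iota ltnS => s1ab up.
  have incr s2 : (a < s2 <= b)%N -> f s2.-1 <= f s2.
    move=> s2ab; have := same_sign s1 s2 s1ab s2ab.
    by rewrite pmulr_rge0 ?subr_ge0 ?subr_gt0.
  by have /andP[] := @nondecreasing_between _ f a b incr s sab; lra.
have decr s2 : (a < s2 <= b)%N -> - f s2.-1 <= - f s2.
  by move=> s2ab; rewrite lerN2 leNgt down // mem_index_iota ltnS.
have /andP[] := @nondecreasing_between _ (fun s => - f s) a b decr s sab.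
by lra.
Qed.

Definition shift_delta (a b : int) (i k : nat) : int :=
  if k == i then a else if k == i.+1 then b else 0.

Lemma shift_delta_opposite i j1 j2 k (e1 e2 : int) :
  j1 != i -> j2 != i -> (k == i) || (k == i.+1) ->
  e1 = 1 \/ e1 = -1 -> e2 = 1 \/ e2 = -1 ->
  shift_delta e1 (- e1) j1 k * shift_delta e2 (- e2) j2 k < 0 ->
  j1 = j2 /\ e2 = - e1.
Proof.
move=> /eqP j1i /eqP j2i /orP[] /eqP k_i [] -> [] ->; rewrite /shift_delta;
  case: (k =P j1) => ?; case: (k =P j1.+1) => ?; case: (k =P j2) => ?;
  case: (k =P j2.+1) => ? /=; lia.
Qed.

Section Shifts.
Variables n m : nat.
Implicit Types (v : {ffun 'I_m.+2 -> int}) (a b : int) (i : nat).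

Lemma shift_byE a b i v k :
  shift_by n m a b i v k =
  if is_bucket m k then ((v k + shift_delta a b i k) %% n)%Z
  else v k + shift_delta a b i k.
Proof.
rewrite ffunE /shift_delta.
by case: (k == i :> nat); case: (k == i.+1 :> nat); rewrite ?addr0.
Qed.

Lemma shift_by_interior a b i v k : ~~ is_bucket m k ->
  shift_by n m a b i v k = v k + shift_delta a b i k.
Proof. by move=> /negbTE k_int; rewrite shift_byE k_int. Qed.

Lemma shift_byC a b i c e j v :
  shift_by n m a b i (shift_by n m c e j v) =
  shift_by n m c e j (shift_by n m a b i v).
Proof.
apply/ffunP => k; rewrite !shift_byE.
by case: (is_bucket m k); rewrite ?modzDml addrAC.
Qed.

Lemma shift_byK a b i v : is_vertex n m v ->
  shift_by n m (- a) (- b) i (shift_by n m a b i v) = v.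
Proof.
move=> /andP[/forallP v_range _]; apply/ffunP => k.
have deltaN : shift_delta (- a) (- b) i k = - shift_delta a b i k.
  rewrite /shift_delta.
  by case: (k == i :> nat); case: (k == i.+1 :> nat); rewrite ?oppr0.
rewrite !shift_byE deltaN; have := v_range k.
case: (is_bucket m k) => /= [/andP[v_ge0 v_lt]|_]; last by rewrite addrK.
by rewrite modzDml addrK modz_small ?v_ge0.
Qed.

Lemma vertex_interior v k :
  is_vertex n m v -> ~~ is_bucket m k -> -1 <= v k <= 1.
Proof.
move=> /andP[/forallP /(_ k) v_range _] /negbTE k_int.
by rewrite k_int in v_range.
Qed.

Lemma sum_shift_delta a b i : (i <= m)%N ->
  \sum_(k < m.+2) shift_delta a b i k = a + b.
Proof.
move=> i_le; have sum_at j (c : int) : (j < m.+2)%N ->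
    \sum_(k < m.+2) (if k == j :> nat then c else 0) = c.
  by move=> j_lt; rewrite -big_mkcond /= (big_pred1 (Ordinal j_lt)).
rewrite -[a in RHS](sum_at i) 1?ltnW // -[b in RHS](sum_at i.+1) //.
rewrite -big_split /=; apply: eq_bigr => k _; rewrite /shift_delta.
case: (nat_of_ord k =P i) => [->|_]; last by rewrite add0r.
by rewrite (ltn_eqF (ltnSn i)) addr0.
Qed.

Lemma is_vertex_shift_by a b i v : (0 < n)%N -> (i <= m)%N -> a + b = 0 ->
  is_vertex n m v ->
  (forall k, ~~ is_bucket m k -> -1 <= shift_by n m a b i v k <= 1) ->
  is_vertex n m (shift_by n m a b i v).
Proof.
move=> n_gt0 i_le ab0 /andP[_ n_dvd] int_range; apply/andP; split.
  apply/forallP => k; case k_bucket: (is_bucket m k).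
    by rewrite shift_byE k_bucket modz_ge0 ?ltz_pmod //; lia.
  by rewrite int_range ?k_bucket.
pose carry k :=
  if is_bucket m k then ((v k + shift_delta a b i k) %/ n)%Z else 0.
have -> : \sum_(k < m.+2) shift_by n m a b i v k =
    \sum_(k < m.+2) v k + \sum_(k < m.+2) shift_delta a b i k
    - (\sum_(k < m.+2) carry k) * n%:Z.
  rewrite mulr_suml -big_split -sumrB; apply: eq_bigr => k _ /=.
  rewrite shift_byE /carry; case: (is_bucket m k); last by rewrite mul0r subr0.
  by rewrite {2}(divz_eq (v k + shift_delta a b i k) n); ring.
by rewrite sum_shift_delta // ab0 addr0 rpredB // dvdz_mull.
Qed.

End Shifts.

Section Walks.
Variables n m : nat.
Implicit Types (p q : nat -> {ffun 'I_m.+2 -> int}) (a b : int) (i : nat).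

Lemma walk_vertex p d s : is_walk n m p d -> (s <= d)%N -> is_vertex n m (p s).
Proof. by case: s => [|s] [p0 walk] // s_lt; have [] := walk s s_lt. Qed.

Lemma walk_step p d s : is_walk n m p d -> (0 < s <= d)%N ->
  exists j e, [/\ (j <= m)%N, e = 1 \/ e = -1
                 & p s = shift_by n m e (- e) j (p s.-1)].
Proof.
case: s => [|s] [_ walk] //= s_lt.
have [_ [_ [j [j_le [ps|ps]]]]] := walk s s_lt.
  by exists j, 1; split => //; left.
by exists j, (-1); split => //; right.
Qed.

Lemma adj_shift_by a b i u v :
  is_vertex n m (shift_by n m a b i u) ->
  is_vertex n m (shift_by n m a b i v) ->
  adj n m u v -> adj n m (shift_by n m a b i u) (shift_by n m a b i v).
Proof.
move=> u_vert v_vert [_ [_ [j [j_le uv]]]].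
do 2 split => //; exists j; split => //.
by case: uv => ->; [left | right]; rewrite shift_byC.
Qed.

(* The shortcut skips steps [t] and [u + 1] and replaces [p t], ..., [p u]
   by their images under the shift. *)
Lemma walk_shortcut a b i p d t u : is_walk n m p d ->
  (0 < t <= u)%N -> (u < d)%N ->
  shift_by n m a b i (p t) = p t.-1 -> shift_by n m a b i (p u) = p u.+1 ->
  (forall s, (t <= s <= u)%N -> is_vertex n m (shift_by n m a b i (p s))) ->
  exists q, [/\ is_walk n m q d.-2, q 0%N = p 0%N & q d.-2 = p d].
Proof.
move=> [p0 walk] /andP[t_gt0 tu] ud Rt Ru R_vert.
set R := shift_by n m a b i in Rt Ru R_vert.
pose q s := if (s < t)%N then p s else if (s < u)%N then R (p s.+1) else p s.+2.
have qE1 s : (s < t)%N -> q s = p s by rewrite /q => ->.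
have qE2 s : (t.-1 <= s < u)%N -> q s = R (p s.+1).
  rewrite /q => /andP[ts ->]; case: ltnP => // st.
  have -> : s = t.-1 by lia.
  by rewrite prednK.
have qE3 s : (u.-1 <= s)%N -> q s = p s.+2.
  rewrite /q => us; case: ltnP => [st|ts].
    have -> : s = t.-1 by lia.
    have -> : t.-1.+2 = u.+1 by lia.
    by rewrite -Ru (_ : u = t) 1?Rt //; lia.
  case: ltnP => // su.
  have -> : s.+1 = u by lia.
  by [].
exists q; split; last 2 first.
- by rewrite qE1.
- by rewrite qE3; [congr p | ]; lia.
split; first by rewrite qE1.
move=> s sd; case: (ltnP s.+1 t) => [st|ts].
  by rewrite !qE1; [apply: walk | ..]; lia.
case: (leqP u.-1 s) => [us|su].
  by rewrite !qE3; [apply: walk | ..]; lia.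
rewrite !qE2; try lia.
by apply: adj_shift_by; [apply: R_vert; lia.. | apply: walk; lia].
Qed.

End Walks.

Section Geodesic.
Variables (n m : nat) (p : nat -> {ffun 'I_m.+2 -> int}) (d : nat).

Definition opposite_shifts i t u := exists e : int,
  [/\ e = 1 \/ e = -1, p t = shift_by n m e (- e) i (p t.-1)
    & p u = shift_by n m (- e) e i (p u.-1)].

Lemma opposite_shiftsC i t u : opposite_shifts i t u -> opposite_shifts i u t.
Proof.
by case=> e [e_unit pt pu]; exists (- e); rewrite opprK; split => //; lia.
Qed.

Hypotheses (n_gt0 : (0 < n)%N) (geo : is_geodesic n m p d).

Section Gap.
Variables (i t u : nat) (e : int).
Hypotheses (i_le : (i <= m)%N) (t_gt0 : (0 < t)%N) (tu : (t < u)%N)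
  (ud : (u <= d)%N) (e_unit : e = 1 \/ e = -1)
  (step_t : p t = shift_by n m e (- e) i (p t.-1))
  (step_u : p u = shift_by n m (- e) e i (p u.-1)).
Hypothesis no_closer_pair : forall j s1 s2, (j <= m)%N -> (t <= s1 < s2)%N ->
  (s2 <= u)%N -> (s2 - s1 < u - t)%N -> ~ opposite_shifts j s1 s2.

Let walk : is_walk n m p d := geo.1.

Lemma inner_step s : (t < s < u)%N -> exists j e', [/\ (j <= m)%N, j != i,
  e' = 1 \/ e' = -1 & p s = shift_by n m e' (- e') j (p s.-1)].
Proof.
move=> s_in.
have [|j [e' [j_le e'_unit ps]]] := walk_step (s := s) walk; first lia.
exists j, e'; split => //; apply/eqP => ji; subst j.
have [e'_eq | e'_eq] : e' = e \/ e' = - e by lia.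
- apply: (no_closer_pair (j := i) (s1 := s) (s2 := u)); try lia.
  by exists e; split; rewrite // -e'_eq.
- apply: (no_closer_pair (j := i) (s1 := t) (s2 := s)); try lia.
  by exists e; split; rewrite // ps e'_eq opprK.
Qed.

(* Only one shift position besides [i] moves the entry [k], so opposite
   increments of [p _ k] would come from an opposite pair strictly inside. *)
Lemma inner_increments_same_sign k :
  ~~ is_bucket m k -> (k == i :> nat) || (k == i.+1 :> nat) ->
  forall s1 s2, (t < s1 < u)%N -> (t < s2 < u)%N ->
  0 <= (p s1 k - p s1.-1 k) * (p s2 k - p s2.-1 k).
Proof.
move=> k_int k_near s1 s2 s1_in s2_in.
have [<- | s12] := eqVneq s1 s2; first by rewrite -expr2 sqr_ge0.
have [j1 [e1 [j1_le j1i e1_unit ps1]]] := inner_step s1_in.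
have [j2 [e2 [_ j2i e2_unit ps2]]] := inner_step s2_in.
rewrite ps1 ps2 !shift_by_interior // ![_ + shift_delta _ _ _ _]addrC !addrK.
rewrite leNgt; apply/negP => neg.
have [j12 e21] := shift_delta_opposite j1i j2i k_near e1_unit e2_unit neg.
have opp : opposite_shifts j1 s1 s2.
  by exists e1; split; rewrite // ps2 -j12 e21 opprK.
have [lt | gt] : (s1 < s2)%N \/ (s2 < s1)%N by lia.
- by apply: (no_closer_pair j1_le _ _ _ opp); lia.
- by apply: (no_closer_pair j1_le _ _ _ (opposite_shiftsC opp)); lia.
Qed.

Let R := shift_by n m (- e) e i.

Lemma unshift_first_step : R (p t) = p t.-1.
Proof.
have := shift_byK e (- e) i (walk_vertex walk (_ : t.-1 <= d)%N).
by rewrite opprK -step_t; apply; lia.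
Qed.

Lemma unshift_interior_bounded s k : ~~ is_bucket m k -> (t <= s <= u.-1)%N ->
  -1 <= R (p s) k <= 1.
Proof.
move=> k_int s_in; rewrite shift_by_interior //.
have vert s' : (s' <= d)%N -> -1 <= p s' k <= 1.
  by move=> s'd; apply: vertex_interior (walk_vertex walk s'd) k_int.
have [k_near | /norP[/negbTE ki /negbTE ki1]] :=
  boolP ((k == i :> nat) || (k == i.+1 :> nat)); last first.
  by rewrite /shift_delta ki ki1 addr0 vert //; lia.
apply: (same_sign_steps_between
         (f := fun s => p s k + shift_delta (- e) e i k)) s_in.
- move=> s1 s2 s1_in s2_in.
  have incr s' : p s' k + shift_delta (- e) e i k
      - (p s'.-1 k + shift_delta (- e) e i k) = p s' k - p s'.-1 k.
    by rewrite opprD addrACA subrr addr0.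
  by rewrite !incr; apply: inner_increments_same_sign => //; lia.
- have /ffunP/(_ k) := unshift_first_step.
  by rewrite /R shift_by_interior // => ->; apply: vert; lia.
- have /ffunP/(_ k) := step_u.
  by rewrite shift_by_interior // => <-; apply: vert.
Qed.

Lemma closest_opposite_shifts_absurd : False.
Proof.
have R_vert s : (t <= s <= u.-1)%N -> is_vertex n m (R (p s)).
  move=> s_in; apply: is_vertex_shift_by => //; first exact: addNr.
    by apply: (walk_vertex walk); lia.
  by move=> k k_int; apply: unshift_interior_bounded.
have R_last : R (p u.-1) = p u.-1.+1 by rewrite prednK ?step_u //; lia.
have [||q [q_walk q0 qd]] :=
  walk_shortcut walk _ _ unshift_first_step R_last R_vert; try lia.
by have := geo.2 q d.-2 q_walk q0 qd; lia.
Qed.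

End Gap.

Lemma no_opposite_shifts i t u : (i <= m)%N -> (0 < t < u)%N -> (u <= d)%N ->
  ~ opposite_shifts i t u.
Proof.
move: {2}(u - t)%N (erefl (u - t)%N) => g.
elim/ltn_ind: g i t u => g IH i t u gE i_le /andP[t_gt0 tu] ud.
move=> [e [e_unit pt pu]].
apply: (closest_opposite_shifts_absurd i_le t_gt0 tu ud e_unit pt pu).
move=> j s1 s2 j_le /andP[ts1 s12] s2u gap.
by apply: (IH (s2 - s1)%N); rewrite ?gE //; lia.
Qed.

End Geodesic.

Theorem lemma5p17 (n m : nat) (p : nat -> {ffun 'I_m.+2 -> int}) (d : nat) :
  (1 <= n)%N ->
  is_geodesic n m p d ->
  forall i : nat, (i <= m)%N ->
  ~ (exists t t' : nat,
       [/\ (1 <= t <= d)%N, (1 <= t' <= d)%N, t <> t',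
           p t = lshift_dY n m i (p t.-1) & p t' = rshift_dY n m i (p t'.-1)]).
Proof.
move=> n_gt0 geo i i_le [t [t' [/andP[t_gt0 td] /andP[t'_gt0 t'd] tt' pt pt']]].
have opp : opposite_shifts n p i t t' by exists 1; split => //; left.
have [lt | gt] : (t < t')%N \/ (t' < t)%N by lia.
- by apply: (no_opposite_shifts n_gt0 geo i_le _ t'd opp); rewrite t_gt0.
- apply: (no_opposite_shifts n_gt0 geo i_le _ td (opposite_shiftsC opp)).
  by rewrite t'_gt0.
Qed.
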